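(* Let $\rho$ be a normal ruling of a front of a Legendrian link $\Lambda$. For any choice of orientations of $\Lambda$ and of $\Lambda^\rho$, \[ \mathrm{rlk}_2(\rho)\equiv \tfrac12\big(tb(\Lambda)+\chi(\rho)+2e_2(\rho)\big) \pmod 2, \] where $2e_2(\rho)$ is understood as $2(s_-(\rho)+f_+-f_-)$ computed from these orientations.
   Context: Normal ruling: fix a front diagram of $\Lambda$ whose crossings and cusps have distinct $x$-coordinates. A normal ruling $\rho$ is a set of crossings (switches) such that, letting $\Lambda^\rho$ be the front obtained by resolving each switch into two horizontal non-crossing segments: (i) each component of $\Lambda^\rho$ is planar isotopic to the standard front of the maximal-$tb$ Legendrian unknot; (ii) exactly two components of $\Lambda^\rho$ are incident to each switch; (iii) in a small vertical strip around each switch, the two incident ruling disks are either nested or disjoint. $\chi(\rho)=c(\Lambda)-s(\rho)$ with $c(\Lambda)$ the number of right cusps and $s(\rho)$ the number of switches. Given orientations $o$ of $\Lambda$ and $o^\rho$ of $\Lambda^\rho$: $s_-(\rho)$ is the number of negative switches (w.r.t. $o$); a crossing of $\Lambda^\rho$ is flipped if its signs w.r.t. $o$ and $o^\rho$ differ; $f_\pm$ is the number of flipped crossings that are positive/negative w.r.t. $o^\rho$. The unoriented resolution linking number $\mathrm{rlk}_2(\rho)$ is the mod $2$ reduction of the sum of the pairwise linking numbers of the components of $\Lambda^\rho$, with any chosen orientation of the components. *)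

From Stdlib Require Import Relations ClassicalDescription.
From mathcomp Require Import all_boot all_order all_algebra.
From mathcomp Require Import intdiv.
Set Implicit Arguments. Unset Strict Implicit. Unset Printing Implicit Defensive.
Import Order.TTheory GRing.Theory Num.Theory.

(* Combinatorial model of a generic front diagram whose crossings and cusps  *)
(* have distinct x-coordinates: the sequence, from left to right, of its     *)
(* elementary events.  Between events the front consists of [width F t]      *)
(* horizontal strands, numbered 0,1,... from bottom to top ("slice" t is the *)
(* vertical line just after the first t events).                            *)
(*   LC k : a left cusp, creating two new strands at positions k, k+1;       *)
(*   RC k : a right cusp, where the strands at positions k, k+1 meet;        *)
(*   X k  : a crossing of the strands at positions k and k+1.               *)
Inductive event := LC of nat | RC of nat | X of nat.

Definition front := seq event.

Definition ev (F : front) (t : nat) : event := nth (X 0) F t.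

Definition step (n : nat) (e : event) : nat :=
  match e with LC _ => n.+2 | RC _ => n.-2 | X _ => n end.

Definition width (F : front) (t : nat) : nat := foldl step 0 (take t F).

Definition valid_front (F : front) : Prop :=
  (forall t, t < size F ->
     match ev F t with
     | LC k => k <= width F t
     | RC k => k.+1 < width F t
     | X k => k.+1 < width F t
     end) /\ width F (size F) = 0.

(* A point (t, p): the strand at position p of slice t. *)
Definition point := (nat * nat)%type.

(* Where the strand at position p of slice t continues in slice t+1, after
   resolving the crossings in the set S of switches (S = pred0 : the front of
   Lambda itself; S = rho : the resolved front Lambda^rho). *)
Definition next_pos (F : front) (S : pred nat) (t p : nat) : option nat :=
  match ev F t with
  | LC k => Some (if p < k then p else p.+2)
  | RC k => if p < k then Some p else if p < k.+2 then None else Some (p - 2)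
  | X k => if S t then Some p
           else Some (if p == k then k.+1 else if p == k.+1 then k else p)
  end.

Definition sedge (F : front) (S : pred nat) (P Q : point) : Prop :=
  [/\ P.1 < size F, P.2 < width F P.1, Q.1 = P.1.+1
    & next_pos F S P.1 P.2 = Some Q.2].

Definition cedge (F : front) (P Q : point) : Prop :=
  exists t k, t < size F /\
   ((ev F t = LC k /\ P = (t.+1, k) /\ Q = (t.+1, k.+1)) \/
    (ev F t = RC k /\ P = (t, k) /\ Q = (t, k.+1))).

Definition connected (F : front) (S : pred nat) : relation point :=
  clos_refl_sym_trans point (fun P Q => sedge F S P Q \/ cedge F P Q).

(* An orientation: d P = true iff the strand through P is oriented from left
   to right.  The direction is preserved along strands and reversed at cusps. *)
Definition is_orientation (F : front) (S : pred nat) (d : point -> bool) : Prop :=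
  (forall P Q, sedge F S P Q -> d P = d Q) /\
  (forall P Q, cedge F P Q -> d P <> d Q).

(* Sign of the crossing between the strands at positions k, k+1 at event t:
   in a front, a crossing is positive iff both strands point in the same
   x-direction. *)
Definition xsign (d : point -> bool) (t k : nat) : int :=
  if d (t, k) == d (t, k.+1) then 1%R else (-1)%R.

Definition is_crossing (F : front) (t : nat) : bool :=
  if ev F t is X _ then true else false.

Definition xpos (F : front) (t : nat) : nat :=
  match ev F t with LC k | RC k | X k => k end.

Definition is_lcusp (F : front) (t : nat) : bool :=
  if ev F t is LC _ then true else false.
Definition is_rcusp (F : front) (t : nat) : bool :=
  if ev F t is RC _ then true else false.

Definition pb (P : Prop) : bool :=
  if excluded_middle_informative P then true else false.

Definition nested_or_disjoint (x1 y1 x2 y2 : nat) : bool :=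
  [|| y1 < x2, y2 < x1, (x1 <= x2) && (y2 <= y1) | (x2 <= x1) && (y1 <= y2)].

Definition normal_ruling (F : front) (rho : pred nat) : Prop :=
  (forall t, rho t -> t < size F /\ is_crossing F t) /\
  (* (i) every component of Lambda^rho is a standard max-tb unknot front:
     exactly one left cusp, exactly one right cusp, no self-crossing *)
  (forall P : point, P.1 <= size F -> P.2 < width F P.1 ->
     (exists! t, t < size F /\ is_lcusp F t /\
                 connected F rho P (t.+1, xpos F t)) /\
     (exists! t, t < size F /\ is_rcusp F t /\
                 connected F rho P (t, xpos F t))) /\
  (forall t, t < size F -> is_crossing F t -> ~~ rho t ->
     ~ connected F rho (t, xpos F t) (t, (xpos F t).+1)) /\
  (* (ii) exactly two components of Lambda^rho are incident to each switch *)
  (forall t, rho t -> ~ connected F rho (t, xpos F t) (t, (xpos F t).+1)) /\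
  (* (iii) near each switch, the two ruling disks are nested or disjoint;
     a (resp. b) is the position of the other strand of the component of the
     strand at position k (resp. k+1) at the switch *)
  (forall t a b, rho t ->
     let k := xpos F t in
     a < width F t -> b < width F t -> a != k -> b != k.+1 ->
     connected F rho (t, k) (t, a) -> connected F rho (t, k.+1) (t, b) ->
     nested_or_disjoint (minn k a) (maxn k a) (minn k.+1 b) (maxn k.+1 b)).

Local Open Scope ring_scope.

Definition writhe (F : front) (d : point -> bool) : int :=
  \sum_(t < size F | is_crossing F t) xsign d t (xpos F t).

Definition ncusps (F : front) : nat := \sum_(t < size F | is_rcusp F t) 1%N.

Definition tb (F : front) (d : point -> bool) : int :=
  writhe F d - (ncusps F)%:Z.

Definition nswitches (F : front) (rho : pred nat) : nat :=
  \sum_(t < size F | rho t) 1%N.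

Definition chi (F : front) (rho : pred nat) : int :=
  (ncusps F)%:Z - (nswitches F rho)%:Z.

Definition nswitches_neg (F : front) (rho : pred nat) (o : point -> bool) : nat :=
  \sum_(t < size F | rho t && (xsign o t (xpos F t) == -1)) 1%N.

Definition flipped (F : front) (rho : pred nat) (o orho : point -> bool) (t : nat) : bool :=
  [&& is_crossing F t, ~~ rho t & xsign o t (xpos F t) != xsign orho t (xpos F t)].

Definition fplus (F : front) (rho : pred nat) (o orho : point -> bool) : nat :=
  \sum_(t < size F | flipped F rho o orho t && (xsign orho t (xpos F t) == 1)) 1%N.

Definition fminus (F : front) (rho : pred nat) (o orho : point -> bool) : nat :=
  \sum_(t < size F | flipped F rho o orho t && (xsign orho t (xpos F t) == -1)) 1%N.

(* e_2(rho) := s_-(rho) + f_+ - f_- ; the paper writes 2 e_2 for 2 times this *)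
Definition e2 (F : front) (rho : pred nat) (o orho : point -> bool) : int :=
  (nswitches_neg F rho o)%:Z + (fplus F rho o orho)%:Z - (fminus F rho o orho)%:Z.

(* Components of Lambda^rho are indexed by their (unique) left cusp: the
   component of left cusp i contains the point (i+1, xpos F i). *)
Definition lcusp_pt (F : front) (i : nat) : point := (i.+1, xpos F i).

Definition crossing_between (F : front) (rho : pred nat) (i j t : nat) : bool :=
  [&& is_crossing F t, ~~ rho t &
   pb ((connected F rho (t, xpos F t) (lcusp_pt F i) /\
        connected F rho (t, (xpos F t).+1) (lcusp_pt F j)) \/
       (connected F rho (t, xpos F t) (lcusp_pt F j) /\
        connected F rho (t, (xpos F t).+1) (lcusp_pt F i)))].

Definition lk (F : front) (rho : pred nat) (orho : point -> bool) (i j : nat) : int :=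
  ((\sum_(t < size F | crossing_between F rho i j t) xsign orho t (xpos F t)) %/ 2)%Z.

Definition rlk (F : front) (rho : pred nat) (orho : point -> bool) : int :=
  \sum_(i < size F | is_lcusp F i)
    \sum_(j < size F | is_lcusp F j && (i < j)%N) lk F rho orho i j.

(* Crossing by crossing, the switches contribute nothing to tb + chi + 2 e_2
   (sign, -1, and +2 exactly when negative), and at the other crossings the
   flip correction turns the sign for o into the sign for o^rho; so
   tb + chi + 2 e_2 is the writhe of Lambda^rho.  No crossing of Lambda^rho is
   a self-crossing of a ruling component, so this writhe is the sum, over pairs
   of components, of their signed crossing counts, which is 2 rlk as soon as
   each such count is even.  For evenness, sweep a vertical line across the
   front and count the pairs (strand of component i, strand of component j
   above it): a cusp adds or removes two adjacent strands of one component and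
   changes this count by an even number, a crossing changes its parity exactly
   when it is between i and j, and both end slices are empty. *)

From Stdlib Require Import Relations ClassicalDescription.
From mathcomp Require Import all_boot all_order all_algebra.
From mathcomp Require Import intdiv zify ring.
Set Implicit Arguments. Unset Strict Implicit. Unset Printing Implicit Defensive.
Import Order.TTheory GRing.Theory Num.Theory.

Fixpoint ordered_pairs (s : seq (bool * bool)) : nat :=
  if s is x :: s' then x.1 * count snd s' + ordered_pairs s' else 0.

Lemma ordered_pairs_cat s1 s2 :
  ordered_pairs (s1 ++ s2) =
  ordered_pairs s1 + ordered_pairs s2 + count fst s1 * count snd s2.
Proof.
elim: s1 => [|x s1 IH] /=; first by rewrite mul0n addn0.
by rewrite IH count_cat; case: x => [[] []] /=; lia.
Qed.

Lemma odd_ordered_pairs_swap s1 s2 x y : ~~ (x.1 && x.2) -> ~~ (y.1 && y.2) ->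
  odd (ordered_pairs (s1 ++ [:: y, x & s2])) =
  odd (ordered_pairs (s1 ++ [:: x, y & s2])) (+) ((x.1 && y.2) || (x.2 && y.1)).
Proof.
rewrite !ordered_pairs_cat /=.
by case: x => [[] []]; case: y => [[] []] //= _ _; rewrite ?addbT ?addbF -?oddS; lia.
Qed.

Lemma odd_ordered_pairs_double s1 s2 x : ~~ (x.1 && x.2) ->
  odd (ordered_pairs (s1 ++ [:: x, x & s2])) = odd (ordered_pairs (s1 ++ s2)).
Proof. by rewrite !ordered_pairs_cat /=; case: x => [[] []] //= _; lia. Qed.

Lemma iota0_cut k n : k <= n -> iota 0 n = iota 0 k ++ iota k (n - k).
Proof. by move=> le_kn; rewrite -{1}(subnKC le_kn) iotaD. Qed.

Lemma iota0_around k n : k.+1 < n ->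
  iota 0 n = iota 0 k ++ [:: k, k.+1 & iota k.+2 (n - k.+2)].
Proof.
move=> lt_kn; rewrite (iota0_cut (ltnW (ltnW lt_kn))).
by have -> : n - k = (n - k.+2).+2 by lia.
Qed.

Lemma widthS F t : t < size F -> width F t.+1 = step (width F t) (ev F t).
Proof. by move=> lt_tF; rewrite /width (take_nth (X 0)) // foldl_rcons. Qed.

Lemma pbP (P : Prop) : reflect P (pb P).
Proof. by rewrite /pb; case: excluded_middle_informative => h; constructor. Qed.

Lemma pb_or_and (A B C D : Prop) :
  pb ((A /\ B) \/ (C /\ D)) = (pb A && pb B) || (pb C && pb D).
Proof.
apply/pbP/orP => [[[/pbP -> /pbP ->]|[/pbP -> /pbP ->]]|]; [by left|by right|].
by case=> /andP[/pbP ? /pbP ?]; [left|right].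
Qed.

Lemma eq_minn_maxn i j a b : i < j ->
  ((i == a) && (j == b)) || ((j == a) && (i == b)) = (i == minn a b) && (j == maxn a b).
Proof.
move=> lt_ij; rewrite /minn /maxn; case: ifP => lt_ab; do ![case: eqP => ? //=]; lia.
Qed.

Lemma sum_lt_pairs_indicator n (P : pred nat) a b : a < b < n -> P a -> P b ->
  \sum_(i < n | P i) \sum_(j < n | P j && (i < j)) ((i == a :> nat) && (j == b :> nat)) = 1.
Proof.
move=> /andP[lt_ab lt_bn] Pa Pb; have lt_an := ltn_trans lt_ab lt_bn.
rewrite (bigD1 (Ordinal lt_an)) //= [X in _ + X]big1 ?addn0 => [|i /andP[_]].
  rewrite (bigD1 (Ordinal lt_bn)) /= ?Pb ?lt_ab // !eqxx [X in _ + X]big1 // => j /andP[_].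
  by rewrite -val_eqE /= => /negbTE->.
by rewrite -val_eqE /= => /negbTE ne_ia; rewrite big1 // => j _; rewrite ne_ia.
Qed.

Section Ruling.
Variables (F : front) (rho : pred nat).

Lemma connected_sym P Q : connected F rho P Q -> connected F rho Q P.
Proof. exact: rst_sym. Qed.

Lemma connected_trans P Q R :
  connected F rho P Q -> connected F rho Q R -> connected F rho P R.
Proof. exact: rst_trans. Qed.

Lemma connected_next t p q : t < size F -> p < width F t ->
  next_pos F rho t p = Some q -> connected F rho (t, p) (t.+1, q).
Proof. by move=> *; apply: rst_step; left. Qed.

Lemma connected_cusp t k : t < size F ->
  (ev F t = LC k -> connected F rho (t.+1, k) (t.+1, k.+1)) /\
  (ev F t = RC k -> connected F rho (t, k) (t, k.+1)).
Proof.
by move=> lt_tF; split=> E; apply: rst_step; right; exists t, k; split=> //;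
  [left|right].
Qed.

Hypotheses (F_valid : valid_front F) (rho_normal : normal_ruling F rho).

Lemma component_lcusp P : P.1 <= size F -> P.2 < width F P.1 ->
  exists2 l0, l0 < size F /\ is_lcusp F l0 &
    forall l, l < size F -> is_lcusp F l -> pb (connected F rho P (lcusp_pt F l)) = (l == l0).
Proof.
move=> P1 P2; have [[l0 [[lt_l0 [lc_l0 P_l0]] uniq_l0]] _] := rho_normal.2.1 P P1 P2.
exists l0 => // l lt_l lc_l; apply/pbP/eqP => [P_l|->] //.
by apply/esym/uniq_l0.
Qed.

Section Labels.

Variables (i j : nat).

Definition comp_label (P : point) : bool * bool :=
  (pb (connected F rho P (lcusp_pt F i)), pb (connected F rho P (lcusp_pt F j))).

Definition slice_labels (t : nat) : seq (bool * bool) :=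
  [seq comp_label (t, p) | p <- iota 0 (width F t)].

Lemma comp_label_connected P Q : connected F rho P Q -> comp_label P = comp_label Q.
Proof.
move=> PQ; rewrite /comp_label.
by congr pair; apply/pbP/pbP => [/(connected_trans (connected_sym PQ))|/(connected_trans PQ)].
Qed.

Lemma comp_label_next t p q : t < size F -> p < width F t ->
  next_pos F rho t p = Some q -> comp_label (t.+1, q) = comp_label (t, p).
Proof. by move=> *; apply/esym/comp_label_connected/connected_next. Qed.

Lemma slice_labels_shift t a b n : t < size F -> a + n <= width F t ->
  (forall p, p < n -> next_pos F rho t (a + p) = Some (b + p)) ->
  [seq comp_label (t.+1, p) | p <- iota b n] = [seq comp_label (t, p) | p <- iota a n].
Proof.
move=> lt_tF le_an shift; rewrite -[b]addn0 -[a]addn0 !iotaDl -!map_comp.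
apply/eq_in_map => p; rewrite mem_iota add0n => /= lt_pn.
by apply: comp_label_next; [| lia | exact: shift].
Qed.

Hypotheses (lt_iF : i < size F) (lcusp_i : is_lcusp F i).
Hypotheses (lt_jF : j < size F) (lcusp_j : is_lcusp F j) (neq_ij : i != j).

Lemma comp_label_not_both P : P.1 <= size F -> P.2 < width F P.1 ->
  ~~ ((comp_label P).1 && (comp_label P).2).
Proof.
move=> P1 P2; have [l0 _ Pl] := component_lcusp P1 P2.
by rewrite /= !Pl //; apply: contra neq_ij => /andP[/eqP-> /eqP->].
Qed.

Lemma odd_slice_labels_lcusp t k : t < size F -> ev F t = LC k ->
  odd (ordered_pairs (slice_labels t.+1)) = odd (ordered_pairs (slice_labels t)).
Proof.
move=> lt_tF E; have := F_valid.1 t lt_tF; rewrite E => le_kw.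
rewrite /slice_labels widthS // E.
rewrite (@iota0_around k (step (width F t) (LC k))) ?ltnS // subSS (iota0_cut le_kw).
rewrite !map_cat /=.
have -> : [seq comp_label (t.+1, p) | p <- iota 0 k] = [seq comp_label (t, p) | p <- iota 0 k].
  by apply: slice_labels_shift => // p lt_pk; rewrite /next_pos E add0n lt_pk.
have -> : [seq comp_label (t.+1, p) | p <- iota k.+2 (width F t - k)] =
          [seq comp_label (t, p) | p <- iota k (width F t - k)].
  by apply: slice_labels_shift => // [|p _]; [lia | rewrite /next_pos E ltnNge leq_addr].
have -> : comp_label (t.+1, k.+1) = comp_label (t.+1, k).
  exact/esym/comp_label_connected/(connected_cusp k lt_tF).1.
apply: odd_ordered_pairs_double; apply: comp_label_not_both => //=.
by rewrite widthS // E /=; lia.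
Qed.

Lemma odd_slice_labels_rcusp t k : t < size F -> ev F t = RC k ->
  odd (ordered_pairs (slice_labels t.+1)) = odd (ordered_pairs (slice_labels t)).
Proof.
move=> lt_tF E; have := F_valid.1 t lt_tF; rewrite E => lt_kw.
rewrite /slice_labels widthS // E (iota0_around lt_kw).
rewrite (@iota0_cut k (step (width F t) (RC k))); last by rewrite /=; lia.
have -> : step (width F t) (RC k) - k = width F t - k.+2 by rewrite /=; lia.
rewrite !map_cat /=.
have -> : [seq comp_label (t.+1, p) | p <- iota 0 k] = [seq comp_label (t, p) | p <- iota 0 k].
  by apply: slice_labels_shift => // [|p lt_pk]; [lia | rewrite /next_pos E add0n lt_pk].
have -> : [seq comp_label (t.+1, p) | p <- iota k (width F t - k.+2)] =
          [seq comp_label (t, p) | p <- iota k.+2 (width F t - k.+2)].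
  apply: slice_labels_shift => // [|p _]; first lia.
  rewrite /next_pos E.
  have [-> ->] : (k.+2 + p < k) = false /\ (k.+2 + p < k.+2) = false by lia.
  by congr Some; lia.
have -> : comp_label (t, k.+1) = comp_label (t, k).
  exact/esym/comp_label_connected/(connected_cusp k lt_tF).2.
by symmetry; apply: odd_ordered_pairs_double; apply: comp_label_not_both => //=; lia.
Qed.

Lemma odd_slice_labels_switch t : t < size F -> rho t ->
  odd (ordered_pairs (slice_labels t.+1)) = odd (ordered_pairs (slice_labels t)).
Proof.
move=> lt_tF sw_t; have [_ X_t] := rho_normal.1 t sw_t.
move: X_t; rewrite /is_crossing /slice_labels widthS //; case E: (ev F t) => [||k] //= _.
congr (odd (ordered_pairs _)); apply: slice_labels_shift => // p _.
by rewrite /next_pos E sw_t.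
Qed.

Lemma odd_slice_labels_crossing t k : t < size F -> ev F t = X k -> ~~ rho t ->
  odd (ordered_pairs (slice_labels t.+1)) =
  odd (ordered_pairs (slice_labels t)) (+) crossing_between F rho i j t.
Proof.
move=> lt_tF E /negbTE nsw_t; have := F_valid.1 t lt_tF; rewrite E => lt_kw.
rewrite /crossing_between /is_crossing /xpos E nsw_t /= pb_or_and.
rewrite /slice_labels widthS // E /= (iota0_around lt_kw) !map_cat /=.
have next_other p : p != k -> p != k.+1 -> next_pos F rho t p = Some p.
  by rewrite /next_pos E nsw_t => /negbTE-> /negbTE->.
have -> : [seq comp_label (t.+1, p) | p <- iota 0 k] = [seq comp_label (t, p) | p <- iota 0 k].
  by apply: slice_labels_shift => // [|p lt_pk]; [lia | apply: next_other; lia].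
have -> : [seq comp_label (t.+1, p) | p <- iota k.+2 (width F t - k.+2)] =
          [seq comp_label (t, p) | p <- iota k.+2 (width F t - k.+2)].
  by apply: slice_labels_shift => // [|p _]; [lia | apply: next_other; lia].
have -> : comp_label (t.+1, k) = comp_label (t, k.+1).
  by apply: comp_label_next; rewrite // /next_pos E nsw_t (gtn_eqF (ltnSn k)) eqxx.
have -> : comp_label (t.+1, k.+1) = comp_label (t, k).
  by apply: comp_label_next; [|lia|rewrite /next_pos E nsw_t eqxx].
by apply: odd_ordered_pairs_swap; apply: comp_label_not_both => //=; lia.
Qed.

Lemma odd_slice_labels_step t : t < size F ->
  odd (ordered_pairs (slice_labels t.+1)) =
  odd (ordered_pairs (slice_labels t)) (+) crossing_between F rho i j t.
Proof.
move=> lt_tF; case E: (ev F t) => [k|k|k].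
- by rewrite /crossing_between /is_crossing E addbF (odd_slice_labels_lcusp lt_tF E).
- by rewrite /crossing_between /is_crossing E addbF (odd_slice_labels_rcusp lt_tF E).
- case sw_t: (rho t); last exact: odd_slice_labels_crossing E (negbT sw_t).
  by rewrite /crossing_between sw_t /= andbF addbF odd_slice_labels_switch.
Qed.

Lemma odd_slice_labels t : t <= size F ->
  odd (ordered_pairs (slice_labels t)) =
  odd (\sum_(0 <= s < t) crossing_between F rho i j s).
Proof.
elim: t => [|t IH] le_tF; first by rewrite /slice_labels /width take0 big_geq.
by rewrite odd_slice_labels_step // IH ?(ltnW le_tF) // big_nat_recr //= oddD oddb.
Qed.

Lemma crossings_between_even : ~~ odd (\sum_(t < size F) crossing_between F rho i j t).
Proof.
by have := odd_slice_labels (leqnn _); rewrite big_mkord /slice_labels F_valid.2 => <-.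
Qed.

End Labels.

Lemma lcusp_pair_of_crossing t : t < size F -> is_crossing F t -> ~~ rho t ->
  exists2 ab : nat * nat, [/\ ab.1 < ab.2, ab.2 < size F, is_lcusp F ab.1 & is_lcusp F ab.2] &
    forall i j, i < size F -> is_lcusp F i -> j < size F -> is_lcusp F j -> i < j ->
      crossing_between F rho i j t = (i == ab.1) && (j == ab.2).
Proof.
move=> lt_tF X_t nsw_t.
have no_self := rho_normal.2.2.1 t lt_tF X_t nsw_t.
have lt_kw : (xpos F t).+1 < width F t.
  by move: X_t (F_valid.1 t lt_tF); rewrite /is_crossing /xpos; case: (ev F t).
rewrite /crossing_between X_t nsw_t; set k := xpos F t in no_self lt_kw *.
have [i0 [lt_i0 lc_i0] Pi0] := @component_lcusp (t, k) (ltnW lt_tF) (ltnW lt_kw).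
have [j0 [lt_j0 lc_j0] Pj0] := @component_lcusp (t, k.+1) (ltnW lt_tF) lt_kw.
have neq_i0j0 : i0 != j0.
  apply/eqP=> eq_i0j0; apply: no_self; apply: (@connected_trans _ (lcusp_pt F i0)).
    by apply/pbP; rewrite Pi0.
  by apply/connected_sym/pbP; rewrite Pj0 // eq_i0j0.
exists (minn i0 j0, maxn i0 j0) => [|i j lt_i lc_i lt_j lc_j lt_ij].
  split=> /=; [lia | by rewrite gtn_max lt_i0 | by rewrite /minn; case: ifP
              | by rewrite /maxn; case: ifP].
by rewrite /= pb_or_and Pi0 // Pi0 // Pj0 // Pj0 // eq_minn_maxn.
Qed.

Lemma count_crossing_pairs t : t < size F ->
  \sum_(i < size F | is_lcusp F i) \sum_(j < size F | is_lcusp F j && (i < j))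
    crossing_between F rho i j t = is_crossing F t && ~~ rho t.
Proof.
move=> lt_tF; case: (boolP (is_crossing F t && ~~ rho t)) => [/andP[X_t nsw_t]|not_X].
  have [[a b] /= [lt_ab lt_bF lc_a lc_b] cbE] := lcusp_pair_of_crossing lt_tF X_t nsw_t.
  rewrite -(@sum_lt_pairs_indicator (size F) (is_lcusp F) a b) ?lt_ab //.
  apply: eq_bigr => i lc_i; apply: eq_bigr => j /andP[lc_j lt_ij].
  by rewrite cbE.
rewrite big1 // => i _; rewrite big1 // => j _.
by rewrite /crossing_between; case: (is_crossing F t) (rho t) not_X => [] [].
Qed.

End Ruling.

Local Open Scope ring_scope.

Lemma dvdz2_sum_xsign n (P : pred 'I_n) (d : point -> bool) (g : 'I_n -> nat) :
  ~~ odd (\sum_(t < n) P t)%N -> (2 %| \sum_(t < n | P t) xsign d t (g t))%Z.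
Proof.
move=> even_P; rewrite -[X in (2 %| X)%Z](subrK (\sum_(t < n | P t) (1 : int))) -sumrB.
apply: rpredD; first by apply: rpred_sum => t _; rewrite /xsign; case: eqP.
have -> : \sum_(t < n | P t) (1 : int) = (\sum_(t < n) P t)%N%:Z.
  by rewrite -natz natr_sum big_mkcond; apply: eq_bigr => t _; case: (P t).
by rewrite dvdzE dvdn2.
Qed.

Definition resolved_writhe (F : front) (rho : pred nat) (d : point -> bool) : int :=
  \sum_(t < size F | is_crossing F t && ~~ rho t) xsign d t (xpos F t).

Lemma tb_chi_e2E (F : front) (rho : pred nat) (o orho : point -> bool) :
  (forall t, rho t -> is_crossing F t) ->
  tb F o + chi F rho + 2 * e2 F rho o orho = resolved_writhe F rho orho.
Proof.
move=> rho_X.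
have termwise : \sum_(t < size F) ((if is_crossing F t then xsign o t (xpos F t) else 0)
   - (if rho t then 1 else 0)
   + 2 * (if rho t && (xsign o t (xpos F t) == -1) then 1 else 0)
   + 2 * (if flipped F rho o orho t && (xsign orho t (xpos F t) == 1) then 1 else 0)
   - 2 * (if flipped F rho o orho t && (xsign orho t (xpos F t) == -1) then 1 else 0)) =
   \sum_(t < size F) (if is_crossing F t && ~~ rho t then xsign orho t (xpos F t) else 0).
  apply: eq_bigr => t _; move: (rho_X t); rewrite /flipped /xsign.
  case: (is_crossing F t); case: (rho t) => [/(_ isT)|_] //=;
  case: (o (t : nat, xpos F t) == o (t : nat, (xpos F t).+1));
  by case: (orho (t : nat, xpos F t) == orho (t : nat, (xpos F t).+1)).
rewrite !sumrB !big_split /= sumrN -!mulr_sumr -!big_mkcond in termwise.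
rewrite /tb /chi /e2 /writhe /nswitches /nswitches_neg /fplus /fminus /resolved_writhe.
by rewrite -!natz !natr_sum -termwise; ring.
Qed.

Lemma resolved_writhe_rlk (F : front) (rho : pred nat) (d : point -> bool) :
  valid_front F -> normal_ruling F rho ->
  resolved_writhe F rho d = 2 * rlk F rho d.
Proof.
move=> F_valid rho_normal.
have lkE (i j : 'I_(size F)) : is_lcusp F i -> is_lcusp F j -> (i < j)%N ->
    2 * lk F rho d i j =
    \sum_(t < size F) (crossing_between F rho i j t)%:R * xsign d t (xpos F t).
  move=> lc_i lc_j lt_ij; rewrite /lk mulrC divzK; last first.
    by apply/dvdz2_sum_xsign/crossings_between_even => //; rewrite neq_ltn lt_ij.
  by rewrite big_mkcond; apply: eq_bigr => t _; case: crossing_between; rewrite ?mul1r ?mul0r.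
rewrite /rlk mulr_sumr.
under eq_bigr => i lc_i.
  rewrite mulr_sumr; under eq_bigr => j /andP[lc_j lt_ij] do rewrite lkE //.
  rewrite exchange_big; over.
rewrite exchange_big /resolved_writhe big_mkcond; apply: eq_bigr => t _.
under eq_bigr => i _ do rewrite -mulr_suml.
rewrite -mulr_suml; under eq_bigr => i _ do rewrite -natr_sum.
by rewrite -natr_sum count_crossing_pairs //; case: (_ && _); rewrite ?mul1r ?mul0r.
Qed.

Theorem lemma3p10 (F : front) (rho : pred nat) (o orho : point -> bool) :
  valid_front F ->
  normal_ruling F rho ->
  is_orientation F pred0 o ->
  is_orientation F rho orho ->
  (2 %| tb F o + chi F rho + 2 * e2 F rho o orho)%Z /\
  (rlk F rho orho = divz (tb F o + chi F rho + 2 * e2 F rho o orho) 2 %[mod 2])%Z.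
Proof.
(* The identity holds for arbitrary direction assignments o and orho. *)
move=> F_valid rho_normal _ _.
have rho_X t : rho t -> is_crossing F t by case/(rho_normal.1 t).
rewrite tb_chi_e2E // resolved_writhe_rlk //.
by split; [apply: dvdz_mulr | rewrite mulKz].
Qed.
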